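(* Consider the iterative minimum repairing algorithm IMR($p$) described in the context, but run with a static parameter: instead of re-estimating the parameter in step (S1), a fixed vector $\phi=(\phi_1,\dots,\phi_p)\in\mathbb{R}^p$ is used in every iteration, i.e. $\phi^{(k)}=\phi$ for all $k\ge 0$. Then the repair result converges, i.e. $$\lim_{k\to+\infty}\sum_{i=1}^n\left(y_i^{(k+1)}-y_i^{(k)}\right)=0.$$
   Context: Let $n\ge 1$ and let $x=(x_1,\dots,x_n)\in\mathbb{R}^n$ be an observed time series. A set $L\subseteq\{1,\dots,n\}$ of labeled indices is given, together with labeled (true) values $y^{(0)}_t$ for $t\in L$. For $t\notin L$ put $y^{(0)}_t=x_t$. Fix an order $p\ge 1$ and a threshold $\tau\ge 0$. The algorithm IMR($p$) produces sequences $y^{(k)}=(y^{(k)}_1,\dots,y^{(k)}_n)$, $k=0,1,2,\dots$; write $z^{(k)}_t=y^{(k)}_t-x_t$. In iteration $k$: (S1) a parameter $\phi^{(k)}=(\phi^{(k)}_1,\dots,\phi^{(k)}_p)$ is obtained (normally by ordinary least squares from $z^{(k)}$; here it is the fixed $\phi$). (S2) For each $t\in\{p+1,\dots,n\}\setminus L$ compute the candidate $\hat y^{(k)}_t=\sum_{i=1}^p\phi^{(k)}_i z^{(k)}_{t-i}+x_t$; index $t$ is a candidate only if $|\hat y^{(k)}_t-y^{(k)}_t|>\tau$. (S3) If there is at least one candidate, choose a candidate $t^*$ minimizing $|\hat y^{(k)}_t-x_t|$ (ties broken arbitrarily), set $y^{(k+1)}_{t^*}=\hat y^{(k)}_{t^*}$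 and $y^{(k+1)}_t=y^{(k)}_t$ for $t\ne t^*$. If there is no candidate, the algorithm terminates and we set $y^{(k+1)}=y^{(k)}$ (so the sequence is constant from then on). In particular labeled values and the first $p$ values are never modified. *)

From Stdlib Require Import Reals Lra Lia List.
Import ListNotations.
Open Scope R_scope.

Definition sum_range (a m : nat) (f : nat -> R) : R :=
  fold_right (fun i acc => f i + acc) 0 (seq a m).

(* Sequences are functions nat -> R; only indices 1..n are meaningful. *)

Definition imr_cand (p : nat) (phi x y : nat -> R) (t : nat) : R :=
  sum_range 1 p (fun i => phi i * (y (t - i)%nat - x (t - i)%nat)) + x t.

Definition is_candidate (n p : nat) (L : nat -> Prop) (tau : R)
    (phi x y : nat -> R) (t : nat) : Prop :=
  (p + 1 <= t <= n)%nat /\ ~ L t /\ Rabs (imr_cand p phi x y t - y t) > tau.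

(* one iteration (S2)-(S3) of IMR(p) with static parameter phi;
   ties in the argmin are broken arbitrarily (any minimizer is allowed) *)
Definition imr_step (n p : nat) (L : nat -> Prop) (tau : R)
    (phi x y y' : nat -> R) : Prop :=
  (exists tstar,
      is_candidate n p L tau phi x y tstar /\
      (forall t, is_candidate n p L tau phi x y t ->
         Rabs (imr_cand p phi x y tstar - x tstar)
           <= Rabs (imr_cand p phi x y t - x t)) /\
      y' tstar = imr_cand p phi x y tstar /\
      (forall t, t <> tstar -> y' t = y t))
  \/
  ((forall t, ~ is_candidate n p L tau phi x y t) /\ (forall t, y' t = y t)).

Definition imr_init (L : nat -> Prop) (x ylab y0 : nat -> R) : Prop :=
  forall t, (L t -> y0 t = ylab t) /\ (~ L t -> y0 t = x t).

Definition imr_run (n p : nat) (L : nat -> Prop) (tau : R)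
    (phi x ylab : nat -> R) (y : nat -> nat -> R) : Prop :=
  imr_init L x ylab (y 0%nat) /\
  forall k, imr_step n p L tau phi x (y k) (y (S k)).

(* Coordinates settle from left to right.  Once y_s no longer changes for any
   s < t, the candidate value for t is a constant c.  Repairing t sets y_t to
   c, after which |c - y_t| = 0 <= tau, so t is never a candidate again; hence
   t changes at most once more.  Every run is therefore eventually constant. *)
From Stdlib Require Import Reals Lra Lia List Classical.
Open Scope R_scope.

Lemma sum_range_ext m a f g :
  (forall i, (a <= i < a + m)%nat -> f i = g i) ->
  sum_range a m f = sum_range a m g.
Proof.
  revert a; induction m as [|m IH]; intros a H; unfold sum_range; simpl; auto.
  rewrite (H a) by lia; f_equal.
  apply (IH (S a)); intros i Hi; apply H; lia.
Qed.

Lemma sum_range_eq0 m a f :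
  (forall i, (a <= i < a + m)%nat -> f i = 0) -> sum_range a m f = 0.
Proof.
  intros H; rewrite (sum_range_ext m a f (fun _ => 0)) by exact H.
  unfold sum_range; induction (seq a m); simpl; lra.
Qed.

Lemma eventually_constant (u : nat -> R) K :
  (forall k, (K <= k)%nat -> u (S k) = u k) ->
  forall k, (K <= k)%nat -> u k = u K.
Proof.
  intros H k Hk; induction Hk as [|k Hk IH]; auto.
  rewrite H by lia; exact IH.
Qed.

Lemma eventually_zero_Un_cv (u : nat -> R) K :
  (forall k, (K <= k)%nat -> u k = 0) -> Un_cv u 0.
Proof.
  intros H eps Heps; exists K; intros k Hk; unfold R_dist.
  rewrite H by lia; rewrite Rminus_0_r, Rabs_R0; exact Heps.
Qed.

Lemma imr_cand_ext p phi x y y' t : (1 <= t)%nat ->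
  (forall s, (s < t)%nat -> y s = y' s) ->
  imr_cand p phi x y t = imr_cand p phi x y' t.
Proof.
  intros Ht H; unfold imr_cand; f_equal.
  apply sum_range_ext; intros i Hi; rewrite H by lia; reflexivity.
Qed.

Lemma imr_step_changed {n p L tau phi x y y' t} :
  imr_step n p L tau phi x y y' -> y' t <> y t ->
  is_candidate n p L tau phi x y t /\ y' t = imr_cand p phi x y t.
Proof.
  intros [[ts [Hts [_ [Hval Hrest]]]] | [_ Hsame]] Hne.
  - destruct (Nat.eq_dec t ts) as [->|Hneq]; auto.
    contradiction (Hne (Hrest t Hneq)).
  - contradiction (Hne (Hsame t)).
Qed.

Lemma repaired_not_candidate n p L tau phi x y t : 0 <= tau ->
  y t = imr_cand p phi x y t -> ~ is_candidate n p L tau phi x y t.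
Proof.
  intros Htau Hy [_ [_ Hgt]].
  rewrite <- Hy, Rminus_diag, Rabs_R0 in Hgt; lra.
Qed.

Section StaticRun.

Variables (n p : nat) (L : nat -> Prop) (tau : R) (phi x : nat -> R)
  (y : nat -> nat -> R).
Hypothesis Htau : 0 <= tau.
Hypothesis Hstep : forall k, imr_step n p L tau phi x (y k) (y (S k)).

Definition frozen_below (t K : nat) : Prop :=
  forall k, (K <= k)%nat -> forall s, (s < t)%nat -> y k s = y K s.

Lemma coordinate0_fixed k : y (S k) 0%nat = y k 0%nat.
Proof.
  destruct (Req_dec (y (S k) 0%nat) (y k 0%nat)) as [E|E]; auto.
  destruct (imr_step_changed (Hstep k) E) as [[Hrange _] _].
  lia.
Qed.

Lemma coordinate_eventually_fixed t K : (1 <= t)%nat -> frozen_below t K ->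
  exists K', (K <= K')%nat /\ forall k, (K' <= k)%nat -> y (S k) t = y k t.
Proof.
  intros Ht Hfrozen.
  set (c := imr_cand p phi x (y K) t).
  assert (Hc : forall k, (K <= k)%nat -> imr_cand p phi x (y k) t = c).
  { intros k Hk; apply imr_cand_ext; auto. }
  assert (Hstay : forall k, (K <= k)%nat -> y k t = c -> y (S k) t = y k t).
  { intros k Hk Hy.
    destruct (Req_dec (y (S k) t) (y k t)) as [E|E]; auto.
    destruct (imr_step_changed (Hstep k) E) as [Hcand _].
    contradict Hcand; apply repaired_not_candidate; auto.
    rewrite Hc; auto. }
  destruct (classic (exists k0, (K <= k0)%nat /\ y (S k0) t <> y k0 t))
    as [[k0 [Hk0 Hne]] | Hnone].
  - assert (Hrep : y (S k0) t = c).
    { destruct (imr_step_changed (Hstep k0) Hne) as [_ ->].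
      auto. }
    assert (Hall : forall k, (S k0 <= k)%nat -> y k t = c).
    { intros k Hk; induction Hk as [|k Hk IH]; auto.
      rewrite Hstay; auto; lia. }
    exists (S k0); split; [lia|].
    intros k Hk; rewrite !Hall by lia; reflexivity.
  - exists K; split; [lia|].
    intros k Hk; apply NNPP; intros E; apply Hnone; exists k; auto.
Qed.

Lemma run_eventually_frozen m : exists K, frozen_below m K.
Proof.
  induction m as [|m [K HK]].
  - exists 0%nat; intros k _ s Hs; lia.
  - assert (Hm : exists K', (K <= K')%nat /\
                   forall k, (K' <= k)%nat -> y (S k) m = y k m).
    { destruct m as [|m].
      - exists K; split; auto using coordinate0_fixed.
      - apply coordinate_eventually_fixed; auto; lia. }
    destruct Hm as [K' [HKK' HK']].
    exists K'; intros k Hk s Hs.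
    destruct (Nat.eq_dec s m) as [->|Hsm].
    + apply (eventually_constant (fun j => y j m)); auto.
    + rewrite (HK k), (HK K') by lia; reflexivity.
Qed.

End StaticRun.

Theorem proposition1 (n p : nat) (x : nat -> R) (L : nat -> Prop)
    (ylab : nat -> R) (phi : nat -> R) (tau : R)
    (y : nat -> nat -> R) :
  (1 <= n)%nat -> (1 <= p)%nat -> 0 <= tau ->
  (forall t, L t -> (1 <= t <= n)%nat) ->
  imr_run n p L tau phi x ylab y ->
  Un_cv (fun k => sum_range 1 n (fun i => y (S k) i - y k i)) 0.
Proof.
  intros _ _ Htau _ [_ Hstep].
  destruct (run_eventually_frozen n p L tau phi x y Htau Hstep (S n)) as [K HK].
  apply (eventually_zero_Un_cv _ K); intros k Hk.
  apply sum_range_eq0; intros i Hi.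
  rewrite (HK (S k)), (HK k) by lia; ring.
Qed.
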